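(* Let $T_C$ and $\mathcal{C}$ be as in the context, and write an element of $\mathcal{C}$ as $[q_0,\dots,q_{m-1},q_m]$. (a) The $LR$-location of $[q_0,\dots,q_{m-1},q_m]$ in $T_C$ is the string $f([q_0,\dots,q_m])=S(q_0,\dots,q_{m-1},q_m-1)$. (b) If $q_0,\dots,q_{m-1}$ are fixed, then the rational value of $[q_0,\dots,q_{m-1},q_m]\in\mathcal{C}$ is an increasing function of $q_m$ if $m$ is even and a decreasing function of $q_m$ if $m$ is odd. (c) The map $f\colon\mathcal{C}\to\{L,R\}^*$ is a bijection which preserves level (the level of $v$ in $T_C$ equals $|f(v)|$), children ($f$ of the left child of $v$ is $f(v)L$, $f$ of the right child is $f(v)R$), and order ($v<v'$ as rational numbers if and only if $r(f(v))<r(f(v'))$). (d) Let $v\in\mathcal{C}$ have level $\ell$, and let $A$ be the set of values of the vertices of $T_C$ of level less than $\ell$ together with $0$ and $\infty$. Then the left parent of $v$ is the largest element of $A$ smaller than $v$, and the right parent of $v$ is the smallest element of $A$ larger than $v$; i.e. the two parents of $v$ are the two closest lower-level approximations to $v$ from below and above.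
   Context: For integers $q_0\geq0$, $q_1,\dots,q_m\geq1$, the continued fraction $[q_0,\dots,q_m]$ denotes the rational $q_0+1/(q_1+1/(\cdots+1/q_m))$, computed by $[q_0]=q_0$ and $[q_0,\dots,q_{m-1},q_m]=[q_0,\dots,q_{m-2},q_{m-1}+1/q_m]$. $T_C$ is the infinite complete binary tree whose vertices are labelled by finite sequences $[q_0,\dots,q_m]$, defined as follows: the root is $[1]$; for a vertex $[q_0,\dots,q_{m-1},q_m]$, if $m$ is even its left child is $[q_0,\dots,q_{m-1},q_m-1,2]$ and its right child is $[q_0,\dots,q_{m-1},q_m+1]$; if $m$ is odd its left child is $[q_0,\dots,q_{m-1},q_m+1]$ and its right child is $[q_0,\dots,q_{m-1},q_m-1,2]$. (All vertices have $q_0\geq0$, $q_1,\dots,q_{m-1}\geq1$, and $q_m\geq2$ if $m>0$.) $\mathcal{C}$ is the set of vertices of $T_C$, ordered by their rational values. The level of a vertex is its distance from the root. $\{L,R\}^*$ is the free monoid on $L,R$ (strings), empty string $\varepsilon$, $|S|$ = number of symbols. The $LR$-location of a vertex is the string of left ($L$) and right ($R$) moves on the path from the root to it. For $k_0\geq0$, $k_1,\dots,k_m\geq1$ (last exponent allowed to be $0$, in which case that block is omitted), $S(k_0,\dots,k_m)$ is the string $R^{k_0}L^{k_1}R^{k_2}\cdots$ with alternating blocks. Define $f([q_0,\dots,q_{m-1},q_m])=S(q_0,\dots,q_{m-1},q_m-1)$. Define $r(\varepsilon)=1$, $r(SL)=r(S)-2^{-|SL|}$, $r(SR)=r(S)+2^{-|SR|}$.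 Parents of a string $S$: $P_L(S)=SR^{-1}$, $P_R(S)=SL^{-1}$, evaluated recursively by $LL^{-1}=\varepsilon$, $RR^{-1}=\varepsilon$, $LR^{-1}=R^{-1}$, $RL^{-1}=L^{-1}$ (and $\varepsilon R^{-1}=R^{-1}$, $\varepsilon L^{-1}=L^{-1}$). The left (resp. right) parent of a vertex $v\in\mathcal{C}$ with $LR$-location $S$ is the vertex with $LR$-location $P_L(S)$ (resp. $P_R(S)$), where the generalized string $R^{-1}$ corresponds to the continued fraction $[0]=0$ and $L^{-1}$ corresponds to the empty continued fraction $[\,]=\infty$. *)

From mathcomp Require Import all_boot all_order all_algebra.
Set Implicit Arguments. Unset Strict Implicit. Unset Printing Implicit Defensive.
Import Order.TTheory GRing.Theory Num.Theory.
Local Open Scope ring_scope.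

Inductive dir := Lm | Rm.

Fixpoint cf (s : seq nat) : rat :=
  match s with
  | [::] => 0
  | [:: q] => q%:R
  | q :: s' => q%:R + (cf s')^-1
  end.

Definition tC_child (d : dir) (v : seq nat) : seq nat :=
  let m := (size v).-1 in
  let p := take m v in
  let qm := last 0%N v in
  let inc := p ++ [:: qm.+1] in
  let spl := p ++ [:: qm.-1; 2%N] in
  match d, odd m with
  | Lm, false => spl
  | Rm, false => inc
  | Lm, true => inc
  | Rm, true => spl
  end.

Definition tC_label (S : seq dir) : seq nat := foldl (fun v d => tC_child d v) [:: 1%N] S.

Definition inC (v : seq nat) : Prop := exists S, tC_label S = v.

Fixpoint Sblocks (b : dir) (ks : seq nat) : seq dir :=
  match ks with
  | [::] => [::]
  | k :: ks' => nseq k b ++ Sblocks (if b is Rm then Lm else Rm) ks'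
  end.
Definition Sstr (ks : seq nat) : seq dir := Sblocks Rm ks.

Definition fC (v : seq nat) : seq dir :=
  Sstr (take (size v).-1 v ++ [:: (last 0%N v).-1]).

(* r(eps)=1, r(SL)=r(S)-2^{-|SL|}, r(SR)=r(S)+2^{-|SR|} *)
Fixpoint r_aux (k : nat) (s : seq dir) : rat :=
  match s with
  | [::] => 0
  | d :: s' => (if d is Lm then -1 else 1) * ((2%:R : rat) ^+ k.+1)^-1 + r_aux k.+1 s'
  end.
Definition rS (s : seq dir) : rat := 1 + r_aux 0 s.

(* Generalized strings: ordinary strings, R^{-1} (value [0]=0), L^{-1} (value [ ]=oo) *)
Inductive gstr := GStr of seq dir | RInv | LInv.

Fixpoint PL_rev (s : seq dir) : gstr :=
  match s with
  | [::] => RInv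
  | Rm :: s' => GStr (rev s')
  | Lm :: s' => PL_rev s'
  end.
Fixpoint PR_rev (s : seq dir) : gstr :=
  match s with
  | [::] => LInv
  | Lm :: s' => GStr (rev s')
  | Rm :: s' => PR_rev s'
  end.
Definition P_L (S : seq dir) : gstr := PL_rev (rev S).
Definition P_R (S : seq dir) : gstr := PR_rev (rev S).

Inductive extQ := Fin of rat | Infty.
Definition ltE (a b : extQ) : Prop :=
  match a, b with
  | Fin x, Fin y => x < y
  | Fin _, Infty => True
  | Infty, _ => False
  end.
Definition leE (a b : extQ) : Prop := a = b \/ ltE a b.

Definition gval (g : gstr) : extQ :=
  match g with
  | GStr T => Fin (cf (tC_label T))
  | RInv => Fin 0
  | LInv => Infty
  end.

Definition inA (l : nat) (a : extQ) : Prop :=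
  a = Fin 0 \/ a = Infty \/ exists T : seq dir, (size T < l)%N /\ a = Fin (cf (tC_label T)).

(* T_C is the Stern--Brocot tree in continued-fraction notation.  If the vertex at
   LR-location S has label [q_0, ..., q_m], the Stern--Brocot matrix of S is the
   continued-fraction matrix of [q_0, ..., q_(m-1)] times a last factor depending on
   q_m and the parity of m.  Hence the value of S is the mediant of the two columns of a determinant-one
   matrix, and these columns are the values of the left and right parents of S.  The
   subtree rooted at S therefore lies strictly between the parents of S, which makes
   both the value and r strictly monotone along the in-order traversal, and no vertex
   outside that subtree lies strictly between them, which makes the parents the
   closest lower-level approximations. *)

From HB Require Import structures.
From mathcomp Require Import all_boot all_order all_algebra.
From mathcomp Require Import ring lra zify.
Import Order.TTheory GRing.Theory Num.Theory.
Local Open Scope ring_scope.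

Definition bool_of_dir (d : dir) : bool := if d is Rm then true else false.
Definition dir_of_bool (b : bool) : dir := if b then Rm else Lm.
Lemma bool_of_dirK : cancel bool_of_dir dir_of_bool. Proof. by case. Qed.
HB.instance Definition _ := Equality.copy dir (can_type bool_of_dirK).

Definition flip (d : dir) : dir := if d is Rm then Lm else Rm.

Lemma Sblocks_rcons b ks k :
  Sblocks b (rcons ks k) = Sblocks b ks ++ nseq k (if odd (size ks) then flip b else b).
Proof.
elim: ks b => [|k0 ks IH] b /=; first by rewrite cats0.
by rewrite IH catA; case: b; case: (odd (size ks)).
Qed.

Definition block_dir (i : nat) : dir := if odd i then Lm else Rm.

Lemma Sstr_rcons ks k : Sstr (rcons ks k) = Sstr ks ++ nseq k (block_dir (size ks)).
Proof. by rewrite /Sstr Sblocks_rcons. Qed.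

Lemma Sstr_rcons_succ ks k :
  Sstr (rcons ks k.+1) = rcons (Sstr (rcons ks k)) (block_dir (size ks)).
Proof. by rewrite !Sstr_rcons -[k.+1]addn1 nseqD catA cats1. Qed.

Lemma Sstr_rcons_one ks k :
  Sstr (rcons (rcons ks k) 1) = rcons (Sstr (rcons ks k)) (block_dir (size ks).+1).
Proof. by rewrite Sstr_rcons size_rcons cats1. Qed.

Lemma tC_label_rcons S d : tC_label (rcons S d) = tC_child d (tC_label S).
Proof. by rewrite /tC_label foldl_rcons. Qed.

Lemma tC_child_rcons d p q :
  tC_child d (rcons p q) =
  if (d == Rm) == odd (size p) then rcons (rcons p q.-1) 2 else rcons p q.+1.
Proof.
rewrite /tC_child size_rcons /= -cats1 (take_size_cat _ (erefl _)) last_cat /=.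
by rewrite -!cats1 -catA; case: d; case: (odd (size p)).
Qed.

Lemma fC_rcons p q : fC (rcons p q) = Sstr (rcons p q.-1).
Proof.
by rewrite /fC size_rcons /= -cats1 (take_size_cat _ (erefl _)) last_cat cats1.
Qed.

Lemma fC_tC_child d p q : (0 < q)%N ->
  fC (tC_child d (rcons p q)) = rcons (fC (rcons p q)) d.
Proof.
case: q => // q _; rewrite tC_child_rcons fC_rcons.
case: ifP => split_d; rewrite fC_rcons /= ?Sstr_rcons_one ?Sstr_rcons_succ /block_dir /=;
  by case: d split_d; case: (odd (size p)).
Qed.

Record mx2 := Mx2 { m11 : nat; m12 : nat; m21 : nat; m22 : nat }.

Definition mul2 (M N : mx2) : mx2 :=
  Mx2 (m11 M * m11 N + m12 M * m21 N)%N (m11 M * m12 N + m12 M * m22 N)%N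
      (m21 M * m11 N + m22 M * m21 N)%N (m21 M * m12 N + m22 M * m22 N)%N.

Definition id2 : mx2 := Mx2 1 0 0 1.

Lemma mul2A : associative mul2.
Proof. by case=> [? ? ? ?] [? ? ? ?] [? ? ? ?]; rewrite /mul2 /=; congr Mx2; ring. Qed.

Lemma mul1x2 : left_id id2 mul2.
Proof. by case=> [? ? ? ?]; rewrite /mul2 /=; congr Mx2; ring. Qed.

Lemma mulx12 : right_id id2 mul2.
Proof. by case=> [? ? ? ?]; rewrite /mul2 /=; congr Mx2; ring. Qed.

(* sb_mx S = [[a, b], [c, d]] encodes the Stern--Brocot interval of the vertex at S:
   its parents are a/c and b/d and its value is their mediant (a + b)/(c + d). *)
Definition move_mx (d : dir) : mx2 := if d is Lm then Mx2 1 0 1 1 else Mx2 1 1 0 1.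
Definition sb_mx (S : seq dir) : mx2 := foldl (fun M d => mul2 M (move_mx d)) id2 S.

Definition cf_mx (q : nat) : mx2 := Mx2 q 1 1 0.
Definition cfs_mx (p : seq nat) : mx2 := foldr (fun q M => mul2 (cf_mx q) M) id2 p.

Lemma sb_mx_rcons S d : sb_mx (rcons S d) = mul2 (sb_mx S) (move_mx d).
Proof. by rewrite /sb_mx foldl_rcons. Qed.

Lemma sb_mx_rcons_Lm S : let: Mx2 a b c d := sb_mx S in
  sb_mx (rcons S Lm) = Mx2 (a + b) b (c + d) d.
Proof. by rewrite sb_mx_rcons; case: (sb_mx S) => a b c d; rewrite /mul2 /=; congr Mx2; ring. Qed.

Lemma sb_mx_rcons_Rm S : let: Mx2 a b c d := sb_mx S in
  sb_mx (rcons S Rm) = Mx2 a (a + b) c (c + d).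
Proof. by rewrite sb_mx_rcons; case: (sb_mx S) => a b c d; rewrite /mul2 /=; congr Mx2; ring. Qed.

Lemma cfs_mx_rcons p q : cfs_mx (rcons p q) = mul2 (cfs_mx p) (cf_mx q).
Proof.
elim: p => [|q0 p IH] /=; first by rewrite mul1x2 mulx12.
by rewrite IH mul2A.
Qed.

Definition tail_mx (odd_m : bool) (q : nat) : mx2 :=
  if odd_m then cf_mx q.-1 else Mx2 1 q.-1 0 1.

Lemma tC_label_sb_mx S : exists p q, tC_label S = rcons p q /\ (0 < q)%N /\
  sb_mx S = mul2 (cfs_mx p) (tail_mx (odd (size p)) q).
Proof.
elim/last_ind: S => [|S d [p [[|q] [E [//= _ HS]]]]].
  by exists [::], 1%N; rewrite /= mulx12.
rewrite tC_label_rcons E tC_child_rcons sb_mx_rcons HS -mul2A /=.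
case: ifP => split_d.
  exists (rcons p q), 2%N; rewrite cfs_mx_rcons -mul2A size_rcons /=.
  by do 2!split => //; case: d split_d; case: (odd (size p)) => //= _;
    congr (mul2 _ _); rewrite /mul2 /=; congr Mx2; ring.
exists p, q.+2; do 2!split => //.
by case: d split_d; case: (odd (size p)) => //= _;
  congr (mul2 _ _); rewrite /mul2 /=; congr Mx2; ring.
Qed.

Lemma fC_tC_label S : fC (tC_label S) = S.
Proof.
elim/last_ind: S => [|S d IH] //.
have [p [q [E [q_gt0 _]]]] := tC_label_sb_mx S.
by rewrite tC_label_rcons E fC_tC_child // -E IH.
Qed.

Lemma inC_last_gt0 v : inC v -> (0 < last 0 v)%N.
Proof.
by move=> [S <-]; have [p [q [-> [q_gt0 _]]]] := tC_label_sb_mx S; rewrite last_rcons.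
Qed.

Definition cfx (p : seq nat) (x : rat) : rat := foldr (fun q y => q%:R + y^-1) x p.

Lemma cf_rcons p q : cf (rcons p q) = cfx p q%:R.
Proof.
elim: p => [|a p IH] //=.
by case E: (rcons p q) => [|h t]; [case: (p) E | rewrite -E IH].
Qed.

Lemma cfx_gt0 p {x} : 0 < x -> 0 < cfx p x.
Proof.
move=> x_gt0; elim: p => [|q p IH] //=.
by rewrite ltr_wpDl // invr_gt0.
Qed.

Lemma cfx_monotone p x y : 0 < x -> x < y ->
  if odd (size p) then cfx p y < cfx p x else cfx p x < cfx p y.
Proof.
move=> x_gt0 lt_xy; elim: p => [|q p IH] //=.
have [cx_gt0 cy_gt0] := (cfx_gt0 p x_gt0, cfx_gt0 p (lt_trans x_gt0 lt_xy)).
by case: (odd (size p)) IH => /= IH; rewrite ltrD2l ltf_pV2.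
Qed.

Lemma cfx_mobius p x : 0 < x ->
  let: Mx2 a b c d := cfs_mx p in
  0 < c%:R * x + d%:R /\ cfx p x = (a%:R * x + b%:R) / (c%:R * x + d%:R).
Proof.
move=> x_gt0; elim: p => [|q p IH] /=; first by rewrite mul1r mul0r addr0 add0r divr1.
have := cfx_gt0 p x_gt0; move: IH; case: (cfs_mx p) => a b c d [den_gt0 ->] /= cfx_gt0.
have num_gt0 : 0 < a%:R * x + b%:R by move: cfx_gt0; rewrite pmulr_lgt0 ?invr_gt0.
split.
  by rewrite !natrD !natrM; nra.
by rewrite !natrD !natrM invf_div; field; rewrite gt_eqF.
Qed.

Definition value (S : seq dir) : rat := cf (tC_label S).

Lemma value_sb_mx S :
  value S = (m11 (sb_mx S) + m12 (sb_mx S))%:R / (m21 (sb_mx S) + m22 (sb_mx S))%:R.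
Proof.
have [p [[|q] [E [//= _ ->]]]] := tC_label_sb_mx S.
have := @cfx_mobius p q.+1%:R (ltr0Sn _ q).
rewrite /value E cf_rcons; case: (cfs_mx p) => a b c d [_ ->].
by case: (odd (size p)) => /=; congr (_ / _); rewrite !natrD !natrM -addn1 natrD; ring.
Qed.

Lemma sb_mx_det S : (m11 (sb_mx S) * m22 (sb_mx S) = m12 (sb_mx S) * m21 (sb_mx S) + 1)%N.
Proof.
elim/last_ind: S => [|S d] //.
have := sb_mx_rcons_Rm S; have := sb_mx_rcons_Lm S.
by case: (sb_mx S) => a b c e /= HL HR det; case: d; rewrite ?HL ?HR /=; nia.
Qed.

Lemma sb_mx_diag_gt0 S : (0 < m11 (sb_mx S))%N && (0 < m22 (sb_mx S))%N.
Proof. by rewrite -muln_gt0 sb_mx_det addn1. Qed.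

Lemma value_gt0 S : 0 < value S.
Proof.
rewrite value_sb_mx; have /andP := sb_mx_diag_gt0 S.
by case: (sb_mx S) => a b c d /= [a_gt0 d_gt0]; rewrite divr_gt0 // ltr0n; lia.
Qed.

Lemma P_L_rcons_Lm S : P_L (rcons S Lm) = P_L S.
Proof. by rewrite /P_L rev_rcons. Qed.
Lemma P_L_rcons_Rm S : P_L (rcons S Rm) = GStr S.
Proof. by rewrite /P_L rev_rcons /= revK. Qed.
Lemma P_R_rcons_Rm S : P_R (rcons S Rm) = P_R S.
Proof. by rewrite /P_R rev_rcons. Qed.
Lemma P_R_rcons_Lm S : P_R (rcons S Lm) = GStr S.
Proof. by rewrite /P_R rev_rcons /= revK. Qed.

Lemma P_L_value S : gval (P_L S) = Fin ((m12 (sb_mx S))%:R / (m22 (sb_mx S))%:R).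
Proof.
elim/last_ind: S => [|S d IH]; first by rewrite /= mul0r.
case: d.
  by rewrite P_L_rcons_Lm IH; have := sb_mx_rcons_Lm S; case: (sb_mx S) => ? ? ? ? ->.
rewrite P_L_rcons_Rm /= -/(value S) value_sb_mx.
by have := sb_mx_rcons_Rm S; case: (sb_mx S) => ? ? ? ? ->.
Qed.

Lemma P_R_value S : gval (P_R S) =
  if m21 (sb_mx S) == 0%N then Infty else Fin ((m11 (sb_mx S))%:R / (m21 (sb_mx S))%:R).
Proof.
elim/last_ind: S => [|S d IH] //.
case: d; last first.
  by rewrite P_R_rcons_Rm IH; have := sb_mx_rcons_Rm S; case: (sb_mx S) => ? ? ? ? ->.
rewrite P_R_rcons_Lm /= -/(value S) value_sb_mx.
have := sb_mx_rcons_Lm S; have /andP := sb_mx_diag_gt0 S.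
by case: (sb_mx S) => a b c e /= [_ e_gt0] ->; rewrite addn_eq0 (gtn_eqF e_gt0) andbF.
Qed.

Definition between_parents (S : seq dir) (y : extQ) : Prop :=
  ltE (gval (P_L S)) y /\ ltE y (gval (P_R S)).

Lemma ltE_trans a b c : ltE a b -> ltE b c -> ltE a c.
Proof. by case: a => [x|] //; case: b => [y|] //; case: c => [z|] //=; exact: lt_trans. Qed.

Lemma leE_of_not_ltE a b : ~ ltE b a -> leE a b.
Proof.
case: a => [x|]; case: b => [y|] //= not_lt; [|by right|by left].
by case: (ltgtP x y) not_lt => [|//|->]; [right|left].
Qed.

Lemma between_parents_value S : between_parents S (Fin (value S)).
Proof.
rewrite /between_parents P_L_value P_R_value value_sb_mx.
have det := sb_mx_det S; have /andP := sb_mx_diag_gt0 S.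
case: (sb_mx S) det => a b c d /= det [a_gt0 d_gt0].
have cd_gt0 : (0 < c + d)%N by lia.
split; first by rewrite ltr_pdivrMr ?ltr0n // mulrAC ltr_pdivlMr ?ltr0n -?natrM ?ltr_nat; nia.
case: eqP => [//|/eqP c_neq0] /=.
by rewrite ltr_pdivrMr ?ltr0n // mulrAC ltr_pdivlMr ?ltr0n ?lt0n -?natrM ?ltr_nat; nia.
Qed.

Lemma between_parents_rcons S d y : between_parents (rcons S d) y -> between_parents S y.
Proof.
have [S_gt_L S_lt_R] := between_parents_value S.
case: d; rewrite /between_parents ?P_L_rcons_Lm ?P_R_rcons_Lm ?P_L_rcons_Rm ?P_R_rcons_Rm.
- by move=> [lt_L lt_R]; split => //; exact: ltE_trans S_lt_R.
- by move=> [lt_L lt_R]; split => //; exact: ltE_trans S_gt_L _.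
Qed.

Lemma between_parents_descendant S X : between_parents S (Fin (value (S ++ X))).
Proof.
elim: X S => [|d X IH] S; first by rewrite cats0; exact: between_parents_value.
by rewrite -cat_rcons; apply: between_parents_rcons (IH _).
Qed.

Lemma value_left_descendant S X : value (rcons S Lm ++ X) < value S.
Proof. by have [_] := between_parents_descendant (rcons S Lm) X; rewrite P_R_rcons_Lm. Qed.

Lemma value_right_descendant S X : value S < value (rcons S Rm ++ X).
Proof. by have [] := between_parents_descendant (rcons S Rm) X; rewrite P_L_rcons_Rm. Qed.

Fixpoint inorder_lt (T S : seq dir) : bool :=
  match T, S with
  | [::], Rm :: _ | Lm :: _, [::] | Lm :: _, Rm :: _ => true
  | Lm :: T', Lm :: S' | Rm :: T', Rm :: S' => inorder_lt T' S'
  | _, _ => false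
  end.

Lemma inorder_lt_total T S : T <> S -> inorder_lt T S \/ inorder_lt S T.
Proof.
elim: T S => [|t T IH] [|s S] //=.
- by case: s; [right|left].
- by case: t; [left|right].
- have IH' d : d :: T <> d :: S -> inorder_lt T S \/ inorder_lt S T.
    by move=> neq_TS; apply: IH => E; apply: neq_TS; rewrite E.
  by case: t; case: s => neq_TS; [exact: IH' neq_TS|left|right|exact: IH' neq_TS].
Qed.

Definition tree_monotone {R : realDomainType} (f : seq dir -> R) : Prop :=
  forall S X, f (rcons S Lm ++ X) < f S < f (rcons S Rm ++ X).

Lemma tree_monotone_inorder {R : realDomainType} {f : seq dir -> R} {T S} : tree_monotone f -> inorder_lt T S -> f T < f S.
Proof.
move=> f_mono; suff lt_cat P : inorder_lt T S -> f (P ++ T) < f (P ++ S) by exact: lt_cat [::].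
elim: T S P => [|t T IH] [|s S] P //=.
- by case: s => // _; have /andP[_] := f_mono P S; rewrite cats0 cat_rcons.
- by case: t => // _; have /andP[] := f_mono P T; rewrite cats0 cat_rcons.
- have /andP[lt_L lt_R] := f_mono P S; have /andP[lt_L' _] := f_mono P T.
  case: t; case: s => //= lt_TS; rewrite -!cat_rcons ?IH //.
  exact: lt_trans lt_L' lt_R.
Qed.

Lemma tree_monotone_lt_iff {R : realDomainType} (f g : seq dir -> R) T S : tree_monotone f -> tree_monotone g ->
  f T < f S <-> g T < g S.
Proof.
move=> f_mono g_mono; have [<-|neq_TS] := eqVneq T S; first by rewrite !ltxx.
have [lt_TS|lt_ST] := inorder_lt_total _ _ (elimN eqP neq_TS).
  by rewrite !(tree_monotone_inorder _ lt_TS).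
by rewrite !ltNge !ltW ?(tree_monotone_inorder _ lt_ST).
Qed.

Lemma value_tree_monotone : tree_monotone value.
Proof. by move=> S X; rewrite value_left_descendant value_right_descendant. Qed.

Lemma r_aux_bound k X : - 2 ^- k < r_aux k X < 2 ^- k.
Proof.
elim: X k => [|d X IH] k /=; first by rewrite oppr_lt0 invr_gt0 exprn_gt0.
have /andP[lo hi] := IH k.+1.
have half : 2 ^- k = 2 ^- k.+1 + 2 ^- k.+1 :> rat.
  by rewrite exprS invfM; set y := (2 ^+ k)^-1; field.
by rewrite half; case: d => /=; apply/andP; split; lra.
Qed.

Lemma r_aux_cat k P X : r_aux k (P ++ X) = r_aux k P + r_aux (k + size P) X.
Proof.
elim: P k => [|d P IH] k /=; first by rewrite add0r addn0.
by rewrite IH addrA addSnnS.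
Qed.

Lemma rS_tree_monotone : tree_monotone rS.
Proof.
move=> S X; rewrite /rS !ltrD2l -!cats1 -!catA !r_aux_cat /= add0n addn1 !addr0.
have /andP[lo hi] := r_aux_bound (size S).+1 X.
by apply/andP; split; lra.
Qed.

Lemma not_between_parents S T : ~~ prefix S T -> ~ between_parents S (Fin (value T)).
Proof.
elim/last_ind: S => [//|S d IH]; first by rewrite prefix0s.
have [/prefixP[Y ->]|not_pre] := boolP (prefix S T); last first.
  by move=> _ /between_parents_rcons; exact: IH.
case: Y => [|e Y]; rewrite ?cats0.
  by case: d => _; rewrite /between_parents ?P_R_rcons_Lm ?P_L_rcons_Rm /= ltxx; case.
rewrite -cats1 prefix_catr // eqxx prefix_cons prefix0s andbT cats1 => neq_de [lt_L lt_R].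
move: lt_L lt_R; rewrite /= -cat_rcons.
case: d e neq_de => [] [] //= _; rewrite ?P_R_rcons_Lm ?P_L_rcons_Rm /= => lt_L lt_R.
- by move: lt_R; rewrite ltNge ltW ?value_right_descendant.
- by move: lt_L; rewrite ltNge ltW ?value_left_descendant.
Qed.

Lemma inA_mono l l' a : (l <= l')%N -> inA l a -> inA l' a.
Proof.
by move=> le_ll' [->|[->|[T [lt_Tl ->]]]]; [left|right; left|right; right; exists T; split => //; lia].
Qed.

Lemma P_L_inA S : inA (size S) (gval (P_L S)).
Proof.
elim/last_ind: S => [|S [] IH]; first by left.
  by rewrite P_L_rcons_Lm size_rcons; exact: inA_mono IH.
by rewrite P_L_rcons_Rm size_rcons; right; right; exists S.
Qed.

Lemma P_R_inA S : inA (size S) (gval (P_R S)).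
Proof.
elim/last_ind: S => [|S [] IH]; first by right; left.
  by rewrite P_R_rcons_Lm size_rcons; right; right; exists S.
by rewrite P_R_rcons_Rm size_rcons; exact: inA_mono IH.
Qed.

Lemma not_prefix_shorter (S T : seq dir) : (size T < size S)%N -> ~~ prefix S T.
Proof. by move=> lt_TS; apply: contraL lt_TS => /size_prefix; rewrite -leqNgt. Qed.

Lemma P_L_closest S a : inA (size S) a -> ltE a (Fin (value S)) -> leE a (gval (P_L S)).
Proof.
move=> [->|[->|[T [lt_TS ->]]]] // lt_TS_val; apply: leE_of_not_ltE.
  by rewrite P_L_value /= ltNge divr_ge0.
move=> lt_L_T; apply: (not_between_parents _ _ (not_prefix_shorter _ _ lt_TS)); split => //.
exact: ltE_trans lt_TS_val (between_parents_value S).2.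
Qed.

Lemma P_R_closest S a : inA (size S) a -> ltE (Fin (value S)) a -> leE (gval (P_R S)) a.
Proof.
move=> [->|[->|[T [lt_TS ->]]]] lt_val_a; apply: leE_of_not_ltE.
- by move: lt_val_a; rewrite /= ltNge ltW ?value_gt0.
- by [].
move=> lt_T_R; apply: (not_between_parents _ _ (not_prefix_shorter _ _ lt_TS)); split => //.
exact: ltE_trans (between_parents_value S).1 lt_val_a.
Qed.

Theorem theorem4 :
  (* (a) *)
  (forall S : seq dir, fC (tC_label S) = S) /\
  (* (b) *)
  (forall (p : seq nat) (a b : nat), inC (p ++ [:: a]) -> inC (p ++ [:: b]) -> (a < b)%N ->
     if odd (size p) then cf (p ++ [:: b]) < cf (p ++ [:: a])
     else cf (p ++ [:: a]) < cf (p ++ [:: b])) /\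
  (* (c) *)
  ((forall v w, inC v -> inC w -> fC v = fC w -> v = w) /\
   (forall S : seq dir, exists v, inC v /\ fC v = S) /\
   (forall S : seq dir, size (fC (tC_label S)) = size S) /\
   (forall v, inC v -> fC (tC_child Lm v) = rcons (fC v) Lm /\
                       fC (tC_child Rm v) = rcons (fC v) Rm) /\
   (forall v w, inC v -> inC w -> (cf v < cf w <-> rS (fC v) < rS (fC w)))) /\
  (* (d) *)
  (forall S : seq dir,
     let x := Fin (cf (tC_label S)) in
     (inA (size S) (gval (P_L S)) /\ ltE (gval (P_L S)) x /\
        (forall a, inA (size S) a -> ltE a x -> leE a (gval (P_L S)))) /\
     (inA (size S) (gval (P_R S)) /\ ltE x (gval (P_R S)) /\
        (forall a, inA (size S) a -> ltE x a -> leE (gval (P_R S)) a))).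
Proof.
split; first exact: fC_tC_label.
split.
  move=> p a b /inC_last_gt0 a_gt0 _ lt_ab; rewrite !cats1 !cf_rcons.
  by rewrite last_cat /= in a_gt0; apply: cfx_monotone; rewrite ?ltr0n ?ltr_nat.
split.
  split; first by move=> v w [S <-] [S' <-]; rewrite !fC_tC_label => ->.
  split; first by move=> S; exists (tC_label S); split; [exists S|exact: fC_tC_label].
  split; first by move=> S; rewrite fC_tC_label.
  split; first by move=> v [S <-]; rewrite -!tC_label_rcons !fC_tC_label.
  move=> v w [S <-] [S' <-]; rewrite !fC_tC_label.
  exact: tree_monotone_lt_iff value_tree_monotone rS_tree_monotone.
move=> S x; have [lt_L_x lt_x_R] := between_parents_value S.
split; split; [exact: P_L_inA| split => //; exact: P_L_closest
              |exact: P_R_inA| split => //; exact: P_R_closest].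
Qed.
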